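(* Let $\mathbb{F}_q$ be a finite field and $\mathcal{M}=\mathbb{F}_q\times\mathbb{F}_q^{*}\times\mathbb{F}_q$. For $(x,y,z)\in\mathcal{M}$ let $C(x,y,z)=\{(x_1,y_1,z_1)\in\mathcal{M}: x_1y-y_1x=z_1-z\}$. Then $\mathcal{M}=\bigsqcup_{m\in\mathbb{F}_q}C(m,1,0)$ is a disjoint union, and each $C(m,1,0)$ has cardinality $q(q-1)$.
   Context: $C(x,y,z)$ is the centralizer of $(x,y,z)$ for the commuting relation on $\mathcal{M}$ given by: $(x_1,y_1,z_1)$ and $(x_2,y_2,z_2)$ commute iff $x_1y_2-y_1x_2=z_1-z_2$. *)

From mathcomp Require Import all_boot all_algebra all_field.
Set Implicit Arguments. Unset Strict Implicit. Unset Printing Implicit Defensive.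
Import GRing.Theory.
Local Open Scope ring_scope.

(* M = F_q x F_q^* x F_q, as a subset of F * F * F (triples ((x,y),z)). *)
Definition Mset (F : finFieldType) : {set F * F * F} :=
  [set t : F * F * F | t.1.2 != 0].

Definition Cent (F : finFieldType) (x y z : F) : {set F * F * F} :=
  [set t in Mset F | t.1.1 * y - t.1.2 * x == t.2 - z].

From mathcomp Require Import all_boot all_algebra all_field.
Import GRing.Theory.
Local Open Scope ring_scope.

(* A point (x, y, z) of M commutes with (m, 1, 0) exactly when its "slope"
   (x - z) / y equals m, so the centralizers C(m, 1, 0) are the fibres of the
   slope map and partition M.  Each fibre is the graph of z = x - m y over
   (x, y) in F_q x F_q^*, hence has q (q - 1) elements. *)

Lemma subr_mul_eq_div (K : fieldType) (x y z m : K) :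
  y != 0 -> (x - y * m == z) = ((x - z) / y == m).
Proof.
by move=> y0; rewrite -[m in RHS]divr1 eqr_div ?oner_neq0 // mulr1 !subr_eq addrC mulrC.
Qed.

Section Centralizers.

Variable F : finFieldType.

Definition slope (t : F * F * F) : F := (t.1.1 - t.2) / t.1.2.

Lemma mem_Cent_slope (m : F) (t : F * F * F) :
  (t \in Cent m 1 0) = (t \in Mset F) && (slope t == m).
Proof.
rewrite !inE /slope mulr1 subr0; apply: andb_id2l; exact: subr_mul_eq_div.
Qed.

Lemma bigcup_Cent : \bigcup_(m : F) Cent m 1 0 = Mset F.
Proof.
apply/setP => t; apply/bigcupP/idP => [[m _]|tM].
  by rewrite mem_Cent_slope => /andP[].
by exists (slope t); rewrite // mem_Cent_slope tM eqxx.
Qed.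

Lemma disjoint_Cent (m m' : F) :
  m != m' -> [disjoint Cent m 1 0 & Cent m' 1 0].
Proof.
move=> neq_mm'; apply/pred0P => t /=.
rewrite !mem_Cent_slope; apply/negP => /andP[/andP[_ /eqP ->] /andP[_ /eqP]].
exact/eqP.
Qed.

Lemma Cent_graph (m : F) :
  Cent m 1 0 = (fun p : F * F => (p, p.1 - p.2 * m)) @: setX [set: F] [set~ 0].
Proof.
apply/setP => [[[x y] z]]; rewrite !inE /= mulr1 subr0.
apply/andP/imsetP => [[y0 /eqP <-]|[[a b]]].
  by exists (x, y); rewrite ?inE.
by rewrite !inE /= => b0 [-> -> ->].
Qed.

Lemma card_Cent (m : F) : #|Cent m 1 0| = (#|F| * (#|F| - 1))%N.
Proof.
rewrite Cent_graph card_imset; last by move=> p q [].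
by rewrite cardsX cardsT cardsC1 subn1.
Qed.

End Centralizers.

Theorem lemma6p1 (F : finFieldType) :
  (\bigcup_(m : F) Cent m 1 0 = Mset F) /\
  (forall m m' : F, m != m' -> [disjoint Cent m 1 0 & Cent m' 1 0]) /\
  (forall m : F, #|Cent m 1 0| = (#|F| * (#|F| - 1))%N).
Proof.
split; first exact: bigcup_Cent.
split; first exact: disjoint_Cent.
exact: card_Cent.
Qed.
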